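(* Let $M(\mathcal A)$ be the total space of a torus bundle $p\colon M(\mathcal A)\to S^1$ with monodromy $\mathcal A\in\mathrm{SL}(2,\mathbb Z)$, let $P$ be a spine of $M(\mathcal A)$, and let $F_t=p^{-1}(t)$ be any fiber. Then $K_t=P\cap F_t$ intersects every loop in $F_t$ representing a nonzero element of $\pi_1(F_t)\cong\mathbb Z^2$.
   Context: $M(\mathcal A)=T^2\times[0,1]/\big((x,1)\sim(\varphi(x),0)\big)$ with $\varphi$ a linear automorphism of $T^2$ inducing $\mathcal A$; $p$ is the projection to the circle. A polyhedron $P$ in the closed 3-manifold $M(\mathcal A)$ is a spine if $M(\mathcal A)\setminus P$ is an open 3-cell. *)

From HB Require Import structures.
From Stdlib Require Import Relations.
From mathcomp Require Import all_boot all_order all_algebra generic_quotient.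
From mathcomp Require Import all_classical all_reals all_analysis.
Set Implicit Arguments. Unset Strict Implicit. Unset Printing Implicit Defensive.
Import Order.TTheory GRing.Theory Num.Theory.
Import numFieldTopology.Exports numFieldNormedType.Exports.
Local Open Scope classical_set_scope.
Local Open Scope ring_scope.
Local Open Scope quotient_scope.

Section TorusBundle.
Variable R : realType.
Variable A : 'M[int]_2.

(* T^2 x [0,1] / ((x,1) ~ (phi x, 0)) is the quotient of
   R^2 x R by the group generated by the integer translations of x and by
   tau : (x, s) |-> (phi x, s - 1), phi x = A x (column convention),
   i.e. x *m A^T for row vectors. *)
Notation cover := ((matrix R 1 2) * R)%type.

Definition Amx : 'M[R]_2 := map_mx (fun z : int => z%:~R) A.

Definition gen_move (a b : cover) : Prop :=
  (b = (a.1 + delta_mx 0 0, a.2)) \/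
  (b = (a.1 + delta_mx 0 1, a.2)) \/
  (b = (a.1 *m Amx^T, a.2 - 1)).

Definition bundle_rel_prop := clos_refl_sym_trans cover gen_move.

Definition bundle_rel : rel cover := fun a b => `[< bundle_rel_prop a b >].

Lemma bundle_rel_refl : reflexive bundle_rel.
Proof. by move=> a; apply/asboolP; apply: rst_refl. Qed.

Lemma bundle_rel_sym : symmetric bundle_rel.
Proof.
move=> a b; apply/asboolP/asboolP => h; exact: rst_sym.
Qed.

Lemma bundle_rel_trans : transitive bundle_rel.
Proof.
move=> b a c /asboolP h1 /asboolP h2; apply/asboolP; exact: rst_trans h1 h2.
Qed.

Definition bundle_equiv :=
  EquivRel bundle_rel bundle_rel_refl bundle_rel_sym bundle_rel_trans.

Definition bundle_quot := {eq_quot bundle_equiv}.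

Definition Mspace := quotient_topology bundle_quot.

Definition proj_M (z : cover) : Mspace := \pi_(bundle_quot) z.

(* The fiber F_t = p^{-1}(t), for t in S^1 = R/Z represented by t : R. *)
Definition fiber (t : R) : set Mspace :=
  [set m | exists z : cover, m = proj_M z /\ exists k : int, z.2 = t + k%:~R].

Definition conv_hull (vs : seq cover) : set cover :=
  [set z | exists w : nat -> R, (forall i, 0 <= w i) /\
     \sum_(i < size vs) w i = 1 /\
     z.1 = \sum_(i < size vs) w i *: (nth (0, 0) vs i).1 /\
     z.2 = \sum_(i < size vs) w i * (nth (0, 0) vs i).2].

(* A (compact) polyhedron in M(A): the image of a finite union of
   (convex hulls of finitely many points = finite unions of) simplices of
   the universal cover R^3, whose PL structure induces that of M(A). *)
Definition polyhedron (P : set Mspace) : Prop :=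
  exists L : seq (seq cover),
    P = [set m | exists2 vs, vs \in L & exists2 z, conv_hull vs z & m = proj_M z].

Definition open_3cell (U : set Mspace) : Prop :=
  exists (f : 'rV[R]_3 -> Mspace) (g : Mspace -> 'rV[R]_3),
    continuous f /\ {within U, continuous g} /\
    (forall y, U (f y)) /\ (forall y, g (f y) = y) /\
    (forall m, U m -> f (g m) = m).

Definition spine (P : set Mspace) : Prop := polyhedron P /\ open_3cell (~` P).

End TorusBundle.

Definition unit_square {R : realType} : set (R * R) :=
  [set p | p.1 \in `[0, 1]%R /\ p.2 \in `[0, 1]%R].

Definition loop_in {R : realType} {X : topologicalType} (S : set X) (gamma : R -> X) :=
  {within `[0, 1]%classic, continuous gamma} /\ gamma 0 = gamma 1 /\
  (forall u, u \in `[0, 1]%R -> S (gamma u)).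

(* gamma represents the trivial element of pi_1(S, gamma 0): a based
   homotopy in S from gamma to the constant loop. *)
Definition null_homotopic_in {R : realType} {X : topologicalType}
  (S : set X) (gamma : R -> X) :=
  exists H : R * R -> X,
    {within (@unit_square R), continuous H} /\
    (forall p, unit_square p -> S (H p)) /\
    (forall u, u \in `[0, 1]%R -> H (u, 0) = gamma u /\ H (u, 1) = gamma 0) /\
    (forall v, v \in `[0, 1]%R -> H (0, v) = gamma 0 /\ H (1, v) = gamma 0).

(* If [gamma] missed [P], it would be a loop in the open 3-cell [M(A) \ P], hence
   null-homotopic in [M(A)].  The fibre is pi_1-injective: a null-homotopy in
   [M(A)] lifts to the universal cover [R^2 x R], the lift of [gamma] is then a
   closed loop at constant height, and its straight-line contraction projects
   to a null-homotopy of [gamma] inside the fibre. *)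

From HB Require Import structures.
From Stdlib Require Import Relations.
From mathcomp Require Import all_boot all_order all_algebra generic_quotient.
From mathcomp Require Import all_classical all_reals all_analysis.
From mathcomp Require Import lra.
Import Order.TTheory GRing.Theory Num.Theory.
Import numFieldTopology.Exports numFieldNormedType.Exports.
Local Open Scope classical_set_scope.
Local Open Scope ring_scope.
Set Implicit Arguments. Unset Strict Implicit. Unset Printing Implicit Defensive.

Lemma clos_int_chain (T : Type) (r : relation T) (x : int -> T) :
  (forall k, r (x k) (x (k + 1))) -> forall n, clos_refl_sym_trans T r (x 0) (x n).
Proof.
move=> step; elim/int_rect => [|n IH|n IH]; first exact: rst_refl.
  by apply: rst_trans IH _; apply: rst_step; rewrite -[n.+1]addn1 PoszD.
apply: rst_trans IH _; apply: rst_sym; apply: rst_step.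
by have := step (- n%:Z - 1); rewrite subrK -opprD -PoszD addn1.
Qed.

Section MatrixNorm.
Variable R : realFieldType.

Lemma mx_norm_entry m n (M : 'M[R]_(m, n)) i j : `|M i j| <= `|M|.
Proof.
rewrite [leRHS]/Num.Def.normr /= mx_normrE.
exact: (le_bigmax _ (fun ij : 'I_m * 'I_n => `|M ij.1 ij.2|) (i, j)).
Qed.

Lemma mx_norm_le m n (M : 'M[R]_(m, n)) c :
  0 <= c -> (forall i j, `|M i j| <= c) -> `|M| <= c.
Proof.
move=> c_ge0 leMc; rewrite [leLHS]/Num.Def.normr /= mx_normrE.
by apply: bigmax_le => // -[i j] _; exact: leMc.
Qed.

Lemma mulmx_norm_le m n p (M : 'M[R]_(m, n)) (N : 'M[R]_(n, p)) :
  `|M *m N| <= n%:R * `|M| * `|N|.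
Proof.
apply: mx_norm_le => [|i j]; first by rewrite !mulr_ge0.
rewrite mxE; apply: le_trans (ler_norm_sum _ _ _) _.
rewrite -mulrA mulr_natl -[in X in _ *+ X](card_ord n) -sumr_const.
by apply: ler_sum => k _; rewrite normrM ler_pM ?mx_norm_entry.
Qed.

Lemma mulmx_exp_norm_le m n (x : 'M[R]_(m, n.+1)) (M : 'M[R]_n.+1) k :
  `|x *m M ^+ k| <= (n.+1%:R * `|M|) ^+ k * `|x|.
Proof.
elim: k => [|k IH]; first by rewrite expr0 mulmx1 mul1r.
rewrite exprSr -mulmxE mulmxA; apply: le_trans (mulmx_norm_le _ _) _.
by rewrite mulrAC exprS -[leRHS]mulrA; apply: ler_wpM2l; rewrite ?mulr_ge0.
Qed.

End MatrixNorm.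

Section ProdNorm.
Context {K : realDomainType} {U V : pseudoMetricNormedZmodType K}.

Lemma norm_fst_le (z : U * V) : `|z.1| <= `|z|.
Proof. by rewrite [leRHS]prod_normE le_max lexx. Qed.

Lemma norm_snd_le (z : U * V) : `|z.2| <= `|z|.
Proof. by rewrite [leRHS]prod_normE le_max lexx orbT. Qed.

End ProdNorm.

Lemma int_num_small (R : archiNumDomainType) (x : R) :
  x \is a Num.int -> `|x| < 1 -> x = 0.
Proof.
move=> xZ lt1; apply/eqP; apply: contraTT lt1 => /(norm_intr_ge1 xZ).
by move/le_gtF ->.
Qed.

Section IntMatrix.
Variable R : pzRingType.

Definition intmx {m n} (M : 'M[int]_(m, n)) : 'M[R]_(m, n) :=
  map_mx (fun z : int => z%:~R) M.

Lemma intmxM m n p (M : 'M[int]_(m, n)) (N : 'M[int]_(n, p)) :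
  intmx (M *m N) = intmx M *m intmx N.
Proof. exact: map_mxM. Qed.

Lemma intmxX n (M : 'M[int]_n.+1) k : intmx (M ^+ k) = intmx M ^+ k.
Proof.
elim: k => [|k IH]; first by rewrite !expr0; exact: map_mx1.
by rewrite !exprSr -!mulmxE intmxM IH.
Qed.

Lemma intmx_row2 (w : 'rV[int]_2) :
  intmx w = (w 0 0)%:~R *: delta_mx 0 0 + (w 0 1)%:~R *: delta_mx 0 1.
Proof.
apply/rowP => -[[|[|//]] j]; rewrite !mxE /= ?(mulr0, mulr1, addr0, add0r);
  by congr (w _ _)%:~R; exact: val_inj.
Qed.

End IntMatrix.

Arguments intmx {R m n} M.

Section Continuity.
Variable R : realType.
Local Notation I := `[(0 : R), 1]%classic.
Local Notation S := (@unit_square R).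

Lemma quarter_gt0 : (0 : R) < 4^-1.
Proof. by rewrite invr_gt0. Qed.

Lemma truncn_inv_lt (d : R) : 0 < d -> (Num.truncn d^-1).+1%:R^-1 < d.
Proof.
move=> d_gt0; rewrite -[d in _ < d]invrK ltf_pV2 ?posrE ?invr_gt0 ?ltr0n //.
exact: truncnS_gt.
Qed.

Lemma within_continuous_nbhs (V : pseudoMetricNormedZmodType R)
    (T : topologicalType) (D : set V) (f : V -> T) (x : V) (W : set T) :
  {within D, continuous f} -> D x -> open W -> W (f x) ->
  exists2 e : R, 0 < e & forall y, D y -> `|x - y| < e -> W (f y).
Proof.
move=> /subspace_continuousP fC Dx oW Wfx.
have := fC x Dx W; rewrite /= nbhs_simpl => /(_ (open_nbhs_nbhs (conj oW Wfx))).
rewrite /within /= => /nbhs_ballP [e e_gt0 xeW]; exists e => // y Dy xy.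
by apply: xeW Dy; rewrite -ball_normE.
Qed.

Definition unif_continuous_on (U V : pseudoMetricNormedZmodType R)
    (D : set U) (f : U -> V) :=
  forall e : R, 0 < e -> exists2 d : R, 0 < d &
    forall p q, D p -> D q -> `|p - q| < d -> `|f p - f q| < e.

Lemma unif_continuous_on_within (X Y : pseudoMetricNormedZmodType R) (D : set X)
    (f : X -> Y) :
  unif_continuous_on D f -> {within D, continuous f}.
Proof.
move=> f_cont; apply/subspace_continuousP => x Dx W /= /nbhs_ballP [e e_gt0 xeW].
rewrite nbhs_simpl /within /=; apply/nbhs_ballP.
have [d d_gt0 f_near] := f_cont e e_gt0; exists d => // y xy Dy.
by apply: xeW; rewrite -ball_normE /=; apply: f_near => //; rewrite -ball_normE in xy.
Qed.

Lemma unif_continuous_on_comp (X Y Z : pseudoMetricNormedZmodType R)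
    (D : set X) (D' : set Y) (g : X -> Y) (f : Y -> Z) :
  (forall x, D x -> D' (g x)) -> (forall x y, `|g x - g y| <= `|x - y|) ->
  unif_continuous_on D' f -> unif_continuous_on D (f \o g).
Proof.
move=> gD g_lip f_cont e /f_cont [d d_gt0 f_near]; exists d => // x y Dx Dy xy.
exact: f_near (gD _ Dx) (gD _ Dy) (le_lt_trans (g_lip x y) xy).
Qed.

Lemma within_continuous_comp_within (T U W : topologicalType) (D : set T) (E : set U)
    (f : T -> U) (g : U -> W) :
  {within D, continuous f} -> {within E, continuous g} ->
  (forall x, D x -> E (f x)) -> {within D, continuous (g \o f)}.
Proof.
move=> /subspace_continuousP fC /subspace_continuousP gC fDE.
apply/subspace_continuousP => x Dx V /= gV.
have := fC x Dx _ (gC (f x) (fDE x Dx) V gV); rewrite /= !nbhs_simpl /within /=.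
by apply: filterS => y fyV Dy; exact: fyV Dy (fDE y Dy).
Qed.

Lemma unit_square_scale (c : R) (p : R * R) :
  0 <= c <= 1 -> unit_square p -> unit_square (c *: p).
Proof.
move=> /andP[c_ge0 c_le1]; rewrite /unit_square /= !in_itv /=.
move=> [/andP[? ?] /andP[? ?]]; rewrite !mulr_ge0 //=.
by split; rewrite -[1]mul1r ler_pM.
Qed.

Lemma unit_square_norm_le1 (p : R * R) : unit_square p -> `|p| <= 1.
Proof.
move=> []; rewrite prod_normE ge_max !in_itv /= => /andP[? ?] /andP[? ?].
by rewrite !ger0_norm //; apply/andP.
Qed.

Lemma compact_unit_square : compact S.
Proof.
have -> : S = `[(0 : R), 1]%classic `*` `[(0 : R), 1]%classic.
  by apply/seteqP; split=> p.
exact: compact_setX (@segment_compact R 0 1) (@segment_compact R 0 1).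
Qed.

Lemma straight_homotopy_continuous (X : normedModType R) (f : R -> X) (x : X) :
  {within I, continuous f} ->
  {within S, continuous (fun p : R * R => (1 - p.2) *: f p.1 + p.2 *: x)}.
Proof.
move=> f_cont.
have fst_cont : {within S, continuous (fun p : R * R => p.1)}.
  apply: unif_continuous_on_within => e e_gt0; exists e => // p q _ _.
  exact: le_lt_trans (norm_fst_le (p - q)).
have snd_cont : {within S, continuous (fun p : R * R => p.2)}.
  apply: unif_continuous_on_within => e e_gt0; exists e => // p q _ _.
  exact: le_lt_trans (norm_snd_le (p - q)).
have f1_cont := within_continuous_comp_within fst_cont f_cont (fun p Sp => proj1 Sp).
apply/subspace_continuousP => p Sp; move: (snd_cont) (f1_cont).
move=> /subspace_continuousP /(_ p Sp) p2C /subspace_continuousP /(_ p Sp) fp1C.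
apply: cvgD; apply: cvgZ => //; [apply: cvgB => //|]; exact: cvg_cst.
Qed.

Lemma interval_discrete_const (X : pseudoMetricNormedZmodType R) (f : R -> X) :
  unif_continuous_on I f ->
  (forall u v, I u -> I v -> `|f u - f v| < 1 -> f u = f v) ->
  forall u, I u -> f u = f 0.
Proof.
move=> f_cont f_discr u Iu; have [d d_gt0 f_near] := f_cont 1 ltr01.
set N := Num.truncn d^-1; have N_gt : N.+1%:R^-1 < d := truncn_inv_lt d_gt0.
have I_chain k : (k <= N.+1)%N -> I (k%:R / N.+1%:R * u).
  move: Iu; rewrite /= !in_itv /= => /andP[u_ge0 u_le1] le_kN.
  rewrite mulr_ge0 ?divr_ge0 ?ler0n //= mulr_ile1 ?divr_ge0 ?ler0n //.
  by rewrite ler_pdivrMr ?ltr0n // mul1r ler_nat.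
suff /(_ N.+1 (leqnn _)) : forall k, (k <= N.+1)%N -> f (k%:R / N.+1%:R * u) = f 0.
  by rewrite divff ?pnatr_eq0 // mul1r.
elim=> [|k IH] lt_kN; first by rewrite mul0r mul0r.
rewrite -(IH (ltnW lt_kN)); apply: f_discr; [exact: I_chain|exact: I_chain (ltnW _)|].
apply: f_near; [exact: I_chain|exact: I_chain (ltnW _)|].
rewrite -mulrBl -mulrBl -natrB // subSnn mul1r normrM ger0_norm ?invr_ge0 ?ler0n //.
move: Iu; rewrite /= in_itv /= => /andP[u_ge0 u_le1].
by rewrite ger0_norm //; apply: le_lt_trans N_gt; rewrite ler_piMr ?invr_ge0 ?ler0n.
Qed.

End Continuity.

(** * Lifting through discrete families over the unit square *)

Section ChainLift.
Variables (R : realType) (X : pseudoMetricNormedZmodType R).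
Variables (L : R * R -> X -> Prop) (x0 : X) (d : R) (N : nat).
Local Notation S := (@unit_square R).
Hypothesis L0 : L 0 x0.
Hypothesis L_sep : forall p, S p -> forall a b, L p a -> L p b -> `|a - b| < 1 -> a = b.
(* Four steps of size [1/4] still stay within the separation radius [1]. *)
Hypothesis L_step : forall p q, S p -> S q -> `|p - q| < d ->
  forall a, L p a -> exists2 b, L q b & `|a - b| < 4^-1.
Hypothesis N_gt : N.+1%:R^-1 < d.

Definition chain (p : R * R) (k : nat) : R * R := (k%:R / N.+1%:R) *: p.

Definition chain_lift (p : R * R) (k : nat) : X :=
  iteri k (fun i a => xget x0 (fun b => L (chain p i.+1) b /\ `|a - b| < 4^-1)) x0.

Lemma chain_in_square p k : S p -> (k <= N.+1)%N -> S (chain p k).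
Proof.
move=> Sp le_kN; apply: unit_square_scale Sp.
by rewrite divr_ge0 ?ler0n //= ler_pdivrMr ?ltr0n // mul1r ler_nat.
Qed.

Lemma chain_step p k : S p -> `|chain p k - chain p k.+1| < d.
Proof.
move=> Sp; rewrite /chain distrC -scalerBl -mulrBl -natrB // subSnn mul1r normrZ.
rewrite ger0_norm ?invr_ge0 ?ler0n //; apply: le_lt_trans N_gt.
by rewrite ler_piMr ?invr_ge0 ?ler0n ?unit_square_norm_le1.
Qed.

Lemma chain_dist p q k : (k <= N.+1)%N -> `|chain p k - chain q k| <= `|p - q|.
Proof.
move=> le_kN; rewrite /chain -scalerBr normrZ ger0_norm ?divr_ge0 ?ler0n //.
by rewrite ler_piMl // ler_pdivrMr ?ltr0n // mul1r ler_nat.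
Qed.

Lemma chain_liftS p k : S p -> (k < N.+1)%N -> L (chain p k) (chain_lift p k) ->
  L (chain p k.+1) (chain_lift p k.+1) /\ `|chain_lift p k - chain_lift p k.+1| < 4^-1.
Proof.
move=> Sp lt_kN Lk.
have [b Lb ab] := L_step (chain_in_square Sp (ltnW lt_kN)) (chain_in_square Sp lt_kN)
  (chain_step k Sp) Lk.
rewrite /chain_lift iteriS; apply: (xgetPex x0 (P := fun b =>
  L (chain p k.+1) b /\ `|chain_lift p k - b| < 4^-1)).
by exists b.
Qed.

Lemma chain_lift_over p k : S p -> (k <= N.+1)%N ->
  L (chain p k) (chain_lift p k) /\ `|chain_lift p k - x0| <= k%:R / 4.
Proof.
move=> Sp; elim: k => [|k IH] lt_kN.
  by rewrite /chain /chain_lift mul0r scale0r subrr normr0 mul0r.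
have [Lk bound] := IH (ltnW lt_kN); have [LSk step] := chain_liftS Sp lt_kN Lk.
split=> //; apply: le_trans (ler_distD (chain_lift p k) _ _) _.
by rewrite distrC -natr1 mulrDl addrC lerD // mul1r ltW.
Qed.

Lemma chain_lift_close p q k : S p -> S q -> `|p - q| < d -> (k <= N.+1)%N ->
  `|chain_lift p k - chain_lift q k| < 4^-1.
Proof.
move=> Sp Sq pq; elim: k => [|k IH] lt_kN; first by rewrite subrr normr0 invr_gt0.
have [Lpk _] := chain_lift_over Sp (ltnW lt_kN).
have [Lqk _] := chain_lift_over Sq (ltnW lt_kN).
have [LpSk stepp] := chain_liftS Sp lt_kN Lpk.
have [LqSk stepq] := chain_liftS Sq lt_kN Lqk.
have [b Lb ab] := L_step (chain_in_square Sp lt_kN) (chain_in_square Sq lt_kN)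
  (le_lt_trans (chain_dist _ _ lt_kN) pq) LpSk.
suff <- : b = chain_lift q k.+1 by [].
apply: L_sep (chain_in_square Sq lt_kN) _ _ Lb LqSk _.
have := IH (ltnW lt_kN); rewrite distrC in ab.
have := ler_distD (chain_lift p k.+1) b (chain_lift q k.+1).
have := ler_distD (chain_lift p k) (chain_lift p k.+1) (chain_lift q k.+1).
have := ler_distD (chain_lift q k) (chain_lift p k) (chain_lift q k.+1).
rewrite [`|chain_lift p k.+1 - chain_lift p k|]distrC; lra.
Qed.

End ChainLift.

Lemma lift_on_unit_square (R : realType) (X : pseudoMetricNormedZmodType R)
    (L : R * R -> X -> Prop) (x0 : X) :
  L 0 x0 ->
  (forall p, unit_square p -> forall a b, L p a -> L p b -> `|a - b| < 1 -> a = b) ->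
  (forall e : R, 0 < e -> exists2 d : R, 0 < d & forall p q,
    unit_square p -> unit_square q -> `|p - q| < d ->
    forall a, L p a -> exists2 b, L q b & `|a - b| < e) ->
  exists F : R * R -> X, [/\ forall p, unit_square p -> L p (F p),
    unif_continuous_on unit_square F &
    exists B : R, forall p, unit_square p -> `|F p - x0| <= B].
Proof.
move=> L0 L_sep L_lift; have [d d_gt0 L_step] := L_lift _ (@quarter_gt0 R).
set N := Num.truncn d^-1; have N_gt : N.+1%:R^-1 < d := truncn_inv_lt d_gt0.
have chainN p : chain N p N.+1 = p by rewrite /chain divff ?scale1r ?pnatr_eq0.
pose F p := chain_lift L x0 N p N.+1.
have over p : unit_square p -> L p (F p) /\ `|F p - x0| <= N.+1%:R / 4.
  by move=> Sp; have := chain_lift_over L0 L_step N_gt Sp (leqnn _); rewrite chainN.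
exists F; split; first by move=> p /over [].
  move=> e e_gt0; have e'_gt0 : 0 < Num.min e 4^-1 by rewrite lt_min e_gt0 quarter_gt0.
  have [d' d'_gt0 L_near] := L_lift _ e'_gt0.
  exists (Num.min d d') => [|p q Sp Sq]; first by rewrite lt_min d_gt0.
  rewrite lt_min => /andP[pq_d pq_d'].
  have [[Lp _] [Lq _]] := (over p Sp, over q Sq).
  have [b Lb Fpb] := L_near p q Sp Sq pq_d' (F p) Lp.
  have Fpq := chain_lift_close L0 L_sep L_step N_gt Sp Sq pq_d (leqnn _).
  move: Fpb; rewrite lt_min => /andP[Fpb_e Fpb].
  suff <- : b = F q by [].
  apply: L_sep Sq _ _ Lb Lq _; have := ler_distD (F p) b (F q).
  by rewrite [`|b - F p|]distrC; rewrite -/(F p) -/(F q) in Fpq; lra.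
by exists (N.+1%:R / 4) => p /over [].
Qed.

(** * Deck transformations of the universal cover [R^2 x R] *)

Section UniversalCover.
Variables (R : realType) (A : 'M[int]_2).
Hypothesis detA : \det A = 1.

Local Notation cover := ('rV[R]_2 * R)%type.
Local Notation rel := (@bundle_rel_prop R A).
Local Notation proj := (@proj_M R A).

Lemma trA_unit : A^T \is a GRing.unit.
Proof. by rewrite unitmxE det_tr detA unitr1. Qed.

Definition monodromy_mx (n : int) : 'M[R]_2 := intmx (A^T ^ n).

Definition deck (n : int) (w : 'rV[int]_2) (z : cover) : cover :=
  (z.1 *m monodromy_mx n + intmx w, z.2 - n%:~R).

Lemma monodromy_mxD m n : monodromy_mx (m + n) = monodromy_mx m *m monodromy_mx n.
Proof. by rewrite /monodromy_mx (exprzDr trA_unit) -mulmxE intmxM. Qed.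

Lemma monodromy_mx0 : monodromy_mx 0 = 1%:M.
Proof. by rewrite /monodromy_mx expr0z /intmx map_mx1. Qed.

Lemma deck0 z : deck 0 0 z = z.
Proof.
by case: z => x s; rewrite /deck monodromy_mx0 mulmx1 /intmx map_mx0 addr0 subr0.
Qed.

Lemma deck_comp m v n w z :
  deck m v (deck n w z) = deck (n + m) (w *m A^T ^ m + v) z.
Proof.
rewrite /deck /=; congr (_, _); last by rewrite intrD opprD addrA.
by rewrite mulmxDl -mulmxA -monodromy_mxD /intmx map_mxD map_mxM addrA.
Qed.

Lemma deck_succ n z : @gen_move R A (deck n 0 z) (deck (n + 1) 0 z).
Proof.
right; right; rewrite /deck /intmx map_mx0 !addr0 /= monodromy_mxD mulmxA.
by rewrite /monodromy_mx expr1z /Amx map_trmx intrD opprD addrA.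
Qed.

Lemma rel_translate (i : 'I_2) (k : int) z :
  rel z (z.1 + k%:~R *: delta_mx 0 i, z.2).
Proof.
have := @clos_int_chain _ (@gen_move R A) (fun k => (z.1 + k%:~R *: delta_mx 0 i, z.2)).
rewrite scale0r addr0 -surjective_pairing; apply=> {}k.
rewrite intrD scalerDl scale1r addrA.
case: i => [[|[|//]] ?]; [left|right; left];
  by congr (_ + delta_mx _ _, _); exact: val_inj.
Qed.

Lemma rel_deck n w z : rel z (deck n w z).
Proof.
have rel_pow : rel z (deck n 0 z).
  rewrite -{1}[z]deck0.
  exact: (@clos_int_chain _ _ (fun k => deck k 0 z) (deck_succ^~ z)).
apply: rst_trans rel_pow _.
rewrite /deck [intmx w]intmx_row2 /intmx map_mx0 addr0 addrA /=.
exact: rst_trans (rel_translate _ _ _) (rel_translate _ _ _).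
Qed.

Lemma rel_deckP a b : rel a b <-> exists n w, b = deck n w a.
Proof.
split; last by move=> [n [w ->]]; exact: rel_deck.
elim=> {a b} [a b|a|a b _ [n [w ->]]|a b c _ [n [w ->]] _ [m [v ->]]].
- case=> [->|[->|->]].
  + exists 0, (delta_mx 0 0).
    by rewrite /deck monodromy_mx0 mulmx1 subr0 /intmx map_delta_mx.
  + exists 0, (delta_mx 0 1).
    by rewrite /deck monodromy_mx0 mulmx1 subr0 /intmx map_delta_mx.
  + exists 1, 0.
    by rewrite /deck /monodromy_mx expr1z /intmx map_mx0 addr0 /Amx map_trmx.
- by exists 0, 0; rewrite deck0.
- by exists (- n), (- (w *m A^T ^ (- n))); rewrite deck_comp addrN subrr deck0.
- by exists (n + m), (w *m A^T ^ m + v); rewrite deck_comp.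
Qed.

Lemma proj_M_eqP a b : proj a = proj b <-> exists n w, b = deck n w a.
Proof.
rewrite -rel_deckP; split => [/eqquotP|?]; first by move/asboolP.
by apply/eqquotP; exact/asboolP.
Qed.

Lemma proj_M_deck n w z : proj (deck n w z) = proj z.
Proof. by apply/esym/proj_M_eqP; exists n, w. Qed.

Lemma proj_M_height a b : proj a = proj b -> b.2 - a.2 \is a Num.int.
Proof.
by move/proj_M_eqP => [n [w ->]]; rewrite /= addrAC subrr add0r rpredN intr_int.
Qed.

Definition deck_growth : R :=
  1 + 2 * (`|intmx A^T : 'M[R]_2| + `|intmx A^T^-1 : 'M[R]_2|).

Lemma deck_growth_ge1 : 1 <= deck_growth.
Proof. by rewrite lerDl mulr_ge0 ?addr_ge0. Qed.

Lemma monodromy_mx_norm_le (x : 'rV[R]_2) n :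
  `|x *m monodromy_mx n| <= deck_growth ^+ `|n|%N * `|x|.
Proof.
have exp_le (M : 'M[int]_2) k :
    `|intmx M : 'M[R]_2| <= `|intmx A^T : 'M[R]_2| + `|intmx A^T^-1 : 'M[R]_2| ->
    `|x *m intmx (M ^+ k)| <= deck_growth ^+ k * `|x|.
  move=> leM; rewrite intmxX; apply: le_trans (mulmx_exp_norm_le _ _ _) _.
  rewrite ler_wpM2r // lerXn2r ?nnegrE ?mulr_ge0 ?(le_trans ler01 deck_growth_ge1) //.
  by rewrite /deck_growth -[leLHS]add0r lerD // ler_wpM2l.
case: n => k; first by apply: exp_le; rewrite lerDl.
by rewrite /monodromy_mx NegzE -exprz_inv abszN; apply: exp_le; rewrite lerDr.
Qed.

Lemma deck_lipschitz n w (u v : cover) :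
  `|deck n w u - deck n w v| <= deck_growth ^+ `|n|%N * `|u - v|.
Proof.
have g_ge1 : 1 <= deck_growth ^+ `|n|%N by rewrite exprn_ege1 // deck_growth_ge1.
rewrite [leLHS]prod_normE ge_max /=; apply/andP; split.
  rewrite opprD addrACA subrr addr0 -mulmxBl.
  apply: le_trans (monodromy_mx_norm_le _ _) _.
  by rewrite ler_wpM2l ?(le_trans ler01) //; exact: norm_fst_le (u - v).
rewrite opprB addrA subrK; apply: le_trans (norm_snd_le (u - v)) _.
by rewrite ler_peMl.
Qed.

Lemma deck_sep n w z : `|z - deck n w z| < 1 -> deck n w z = z.
Proof.
move=> lt1; have n0 : n = 0.
  have := le_lt_trans (norm_snd_le _) lt1; rewrite /= opprB addrC subrK.
  by move/(int_num_small (intr_int _ _))/eqP; rewrite intr_eq0 => /eqP.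
have w0 : w = 0.
  move: lt1; rewrite n0 /deck monodromy_mx0 mulmx1 => /(le_lt_trans (norm_fst_le _)).
  rewrite /= opprD addNKr normrN => lt1; apply/rowP => j; rewrite mxE.
  apply/eqP; rewrite -(intr_eq0 R); apply/eqP/int_num_small; first exact: intr_int.
  have := mx_norm_entry (intmx w : 'rV[R]_2) 0 j; rewrite mxE (_ : 0 = ord0) //.
  by move/le_lt_trans; apply.
by rewrite n0 w0 deck0.
Qed.

Lemma deck_transport (a0 b0 a : cover) (N : nat) :
  proj a0 = proj a -> `|a.2 - a0.2| < N%:R ->
  exists2 b, proj b = proj b0 & `|a - b| <= deck_growth ^+ N * `|a0 - b0|.
Proof.
move=> /proj_M_eqP [n [w ->]] ltN; exists (deck n w b0).
  by apply/esym/proj_M_eqP; exists n, w.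
apply: le_trans (deck_lipschitz _ _ _ _) _.
rewrite ler_wpM2r // ler_weXn2l ?deck_growth_ge1 //.
move: ltN; rewrite /= addrAC subrr add0r normrN -intr_norm -natr_absz ltr_nat.
exact: ltnW.
Qed.

Definition proj_ball (z : cover) (r : R) : set (Mspace R A) :=
  proj @` [set b | `|b - z| < r].

Lemma open_proj_ball z r : open (proj_ball z r).
Proof.
rewrite /open /= /quotient_open openE => c [b bz /esym /proj_M_eqP [m [v bE]]].
set L := deck_growth ^+ `|m|%N.
have L_gt0 : 0 < L by rewrite exprn_gt0 // (lt_le_trans ltr01 deck_growth_ge1).
rewrite /interior; apply/nbhs_ballP; exists ((r - `|b - z|) / L) => [|c'].
  by rewrite /= divr_gt0 // subr_gt0.
rewrite -ball_normE /= => cc'; exists (deck m v c'); last exact: proj_M_deck.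
have := deck_lipschitz m v c' c; rewrite -bE -/L => lip.
have := ler_distD b (deck m v c') z; rewrite ltr_pdivlMr // distrC in cc'.
by rewrite (mulrC L) in lip => tri; rewrite /= in bz *; lra.
Qed.

Variable V : pseudoMetricNormedZmodType R.

Lemma local_lift_step (S : set V) (H : V -> Mspace R A) x (K e : R) :
  {within S, continuous H} -> S x -> 0 < e ->
  exists2 rho : R, 0 < rho & forall y q, S y -> S q ->
    `|x - y| < rho -> `|x - q| < rho ->
    forall a, proj a = H y -> `|a.2| <= K ->
    exists2 b, proj b = H q & `|a - b| < e.
Proof.
move=> HC Sx e_gt0; set z := repr (H x).
have Hxz : H x = proj z by rewrite /proj_M reprK.
set N := (Num.truncn (`|z.2| + 1 + K)).+1.
have ltN : `|z.2| + 1 + K < N%:R := truncnS_gt _.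
set L := deck_growth ^+ N.
have L_gt0 : 0 < L by rewrite exprn_gt0 // (lt_le_trans ltr01 deck_growth_ge1).
set r := Num.min 1 (e / L / 2).
have [r_le1 r_le] : r <= 1 /\ r <= e / L / 2 by rewrite !ge_min !lexx orbT.
have r_gt0 : 0 < r by rewrite lt_min ltr01 !divr_gt0.
have Hx_ball : proj_ball z r (H x) by exists z; rewrite /= ?subrr ?normr0.
have [rho rho_gt0 HW] := within_continuous_nbhs HC Sx (@open_proj_ball z r) Hx_ball.
exists rho => // y q Sy Sq xy xq a Hya aK.
have [a0 /= a0z Ha0] := HW y Sy xy; have [b0 /= b0z Hb0] := HW q Sq xq.
have [|b Hb ab] := @deck_transport a0 b0 a N (etrans Ha0 (esym Hya)).
  have := norm_snd_le (a0 - z); have := ler_distD z.2 a0.2 0.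
  rewrite !subr0 distrC; have := ler_normB a.2 a0.2; lra.
exists b; first by rewrite Hb Hb0.
have ab0 : `|a0 - b0| < r + r.
  by apply: le_lt_trans (ler_distD z a0 b0) _; rewrite (distrC z) ltrD.
apply: le_lt_trans ab _; rewrite mulrC -ltr_pdivlMr //.
by apply: lt_le_trans ab0 _; rewrite [e / L]splitr lerD.
Qed.

Lemma uniform_lift_step (S : set V) (H : V -> Mspace R A) : compact S ->
  {within S, continuous H} -> forall K e : R, 0 < e ->
  exists2 d : R, 0 < d & forall p q, S p -> S q -> `|p - q| < d ->
    forall a, proj a = H p -> `|a.2| <= K ->
    exists2 b, proj b = H q & `|a - b| < e.
Proof.
move=> Scpt HC K e e_gt0.
pose P (n : nat) (p : V) := S p -> forall q, S q -> `|p - q| < n.+1%:R^-1 ->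
  forall a, proj a = H p -> `|a.2| <= K -> exists2 b, proj b = H q & `|a - b| < e.
suff [N _ PN] : \forall n \near \oo, S `<=` P n.
  exists N.+1%:R^-1; first by rewrite invr_gt0 ltr0n.
  by move=> p q Sp; exact: (PN N (leqnn N) p Sp Sp q).
apply: ((compact_near_coveringP S).1 Scpt nat \oo P _) => x Sx.
have [rho rho_gt0 lift] := local_lift_step K HC Sx e_gt0.
set N0 := Num.truncn (2 / rho).
exists ([set y | `|x - y| < rho / 2], [set n | (N0 <= n)%N]).
  split; last by exists N0.
  by apply/nbhs_ballP; exists (rho / 2) => [|y]; rewrite /= ?divr_gt0 // -ball_normE.
move=> [y n] /= [xy N0n] Sy q Sq yq; apply: lift => //.
  by apply: lt_trans xy _; rewrite ltr_pdivrMr // ltr_pMr // ltr1n.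
have n_gt : n.+1%:R^-1 < rho / 2.
  rewrite -[rho / 2]invf_div ltf_pV2 ?posrE ?ltr0n ?divr_gt0 //.
  by apply: lt_le_trans (truncnS_gt _) _; rewrite ler_nat ltnS.
by apply: le_lt_trans (ler_distD y x q) _; rewrite [rho]splitr ltrD // (lt_trans yq).
Qed.

End UniversalCover.

(** * Homotopy lifting and pi_1-injectivity of the fibres *)

Section HomotopyLifting.
Variables (R : realType) (A : 'M[int]_2).
Hypothesis detA : \det A = 1.
Local Notation cover := ('rV[R]_2 * R)%type.
Local Notation S := (@unit_square R).
Local Notation proj := (@proj_M R A).
Variable H : R * R -> Mspace R A.
Hypothesis H_cont : {within S, continuous H}.

Lemma lift_height_step (e : R) : 0 < e -> exists2 d : R, 0 < d & forall p q,
  S p -> S q -> `|p - q| < d -> forall s, (exists2 z, proj z = H p & z.2 = s) ->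
  exists2 s', (exists2 z, proj z = H q & z.2 = s') & `|s - s'| < e.
Proof.
move=> e_gt0.
have [d d_gt0 lift] :=
  uniform_lift_step detA (@compact_unit_square R) H_cont 1 e_gt0.
exists d => // p q Sp Sq pq _ [z Hz <-]; set n := Num.floor z.2.
have /andP[n_le n_gt] := floor_itv z.2; rewrite intrD in n_gt.
have Hz' : proj (deck A n 0 z) = H p by rewrite proj_M_deck.
have z'_le1 : `|(deck A n 0 z).2| <= 1 by rewrite /= ger0_norm ?subr_ge0 //; lra.
have [b Hb zb] := lift p q Sp Sq pq _ Hz' z'_le1.
exists (deck A (- n) 0 b).2; first by exists (deck A (- n) 0 b); rewrite ?proj_M_deck.
apply: le_lt_trans zb; apply: le_trans (norm_snd_le _); rewrite /= mulrNz.
by rewrite opprK opprD addrA addrAC.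
Qed.

Lemma lift_step_at_height (h : R * R -> R) (B : R) :
  (forall p, S p -> exists2 z, proj z = H p & z.2 = h p) ->
  unif_continuous_on S h -> (forall p, S p -> `|h p| <= B) ->
  forall e : R, 0 < e -> exists2 d : R, 0 < d & forall p q, S p -> S q ->
    `|p - q| < d -> forall a, proj a = H p /\ a.2 = h p ->
    exists2 b, proj b = H q /\ b.2 = h q & `|a - b| < e.
Proof.
move=> h_over h_cont h_bd e e_gt0.
have e'_gt0 : 0 < Num.min e 4^-1 by rewrite lt_min e_gt0 quarter_gt0.
have [d d_gt0 lift] :=
  uniform_lift_step detA (@compact_unit_square R) H_cont B e'_gt0.
have [eta eta_gt0 h_near] := h_cont _ (@quarter_gt0 R).
exists (Num.min d eta) => [|p q Sp Sq]; first by rewrite lt_min d_gt0.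
rewrite lt_min => /andP[pq_d pq_eta] a [Ha a_h].
have a_bd : `|a.2| <= B by rewrite a_h h_bd.
have [b Hb] := lift p q Sp Sq pq_d a Ha a_bd.
rewrite lt_min => /andP[ab_e ab]; exists b => //; split=> //.
have [z Hz z_h] := h_over q Sq; apply/subr0_eq/int_num_small.
  by rewrite -z_h; exact: proj_M_height (etrans Hz (esym Hb)).
have := h_near p q Sp Sq pq_eta; have := le_lt_trans (norm_snd_le (a - b)) ab.
rewrite /= a_h => ab2 h_pq; have := ler_distD (h p) b.2 (h q).
by rewrite [`|b.2 - h p|]distrC; lra.
Qed.

(* Deck transformations are uniformly Lipschitz only at bounded height, so the
   height is lifted first (to the cover [R] of the circle) and the whole map
   afterwards, at that height. *)
Lemma lift_homotopy : exists2 G : R * R -> cover,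
  forall p, S p -> proj (G p) = H p & unif_continuous_on S G.
Proof.
have S0 : S 0 by split; rewrite /= in_itv /= lexx ler01.
pose over_height p s := exists2 z, proj z = H p & z.2 = s.
set s0 := (repr (H 0)).2.
have over_s0 : over_height 0 s0 by exists (repr (H 0)); rewrite // /proj_M reprK.
have height_sep p : S p -> forall s s', over_height p s -> over_height p s' ->
    `|s - s'| < 1 -> s = s'.
  move=> _ _ _ [z Hz <-] [z' Hz' <-] zz'; apply/esym/subr0_eq/int_num_small.
    exact: proj_M_height (etrans Hz (esym Hz')).
  by rewrite distrC.
have [h [h_over h_cont [B h_bd]]] :=
  lift_on_unit_square over_s0 height_sep lift_height_step.
have h_bd' p : S p -> `|h p| <= B + `|s0|.
  move=> Sp; rewrite -[h p](subrK s0).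
  by apply: le_trans (ler_normD _ _) _; rewrite lerD2r h_bd.
have [z0 Hz0 z0_h] := h_over 0 S0.
have lift_sep p : S p -> forall a b, proj a = H p /\ a.2 = h p ->
    proj b = H p /\ b.2 = h p -> `|a - b| < 1 -> a = b.
  move=> _ a b [Ha _] [Hb _].
  have [n [w ->]] := (proj_M_eqP detA _ _).1 (etrans Ha (esym Hb)).
  by move/deck_sep ->.
have [G [G_over G_cont _]] := lift_on_unit_square (conj Hz0 z0_h) lift_sep
  (lift_step_at_height h_over h_cont h_bd').
by exists G => // p /G_over [].
Qed.

End HomotopyLifting.

Lemma null_homotopic_in_subset (R : realType) (X : topologicalType) (U V : set X)
    (gamma : R -> X) :
  U `<=` V -> null_homotopic_in U gamma -> null_homotopic_in V gamma.
Proof.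
by move=> UV [K [K_cont [KU K_ends]]]; exists K; split=> //; split=> // p /KU /UV.
Qed.

Section FiberInjectivity.
Variables (R : realType) (A : 'M[int]_2).
Hypothesis detA : \det A = 1.
Local Notation cover := ('rV[R]_2 * R)%type.
Local Notation I := `[(0 : R), 1]%classic.
Local Notation S := (@unit_square R).
Local Notation proj := (@proj_M R A).

Let I0 : I 0. Proof. by rewrite /= in_itv /= lexx ler01. Qed.
Let I1 : I 1. Proof. by rewrite /= in_itv /= lexx ler01. Qed.

Lemma lift_const_on_segment (G : R * R -> cover) (g : R -> R * R) m :
  unif_continuous_on S G -> (forall u, I u -> S (g u)) ->
  (forall u v, `|g u - g v| <= `|u - v|) -> (forall u, I u -> proj (G (g u)) = m) ->
  G (g 1) = G (g 0).
Proof.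
move=> G_cont gS g_lip Gm; apply: (@interval_discrete_const R _ (G \o g)) => //.
  exact: unif_continuous_on_comp gS g_lip G_cont.
move=> u v Iu Iv /=.
have [n [w ->]] := (proj_M_eqP detA _ _).1 (etrans (Gm v Iv) (esym (Gm u Iu))).
by rewrite distrC => /deck_sep.
Qed.

Lemma closed_lift_null_homotopic t (gamma : R -> Mspace R A) (phi : R -> cover) :
  loop_in (@fiber R A t) gamma -> unif_continuous_on I phi ->
  (forall u, I u -> proj (phi u) = gamma u) -> phi 1 = phi 0 ->
  null_homotopic_in (@fiber R A t) gamma.
Proof.
move=> [_ [_ gammaF]] phi_cont phi_over phi_closed.
have height_int u : I u -> (phi u).2 - t \is a Num.int.
  move=> Iu; have [z [gz [k zk]]] := gammaF u Iu.
  have := proj_M_height detA (etrans (esym gz) (esym (phi_over u Iu))).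
  rewrite zk opprD addrA => phi_k.
  by rewrite -(subrK k%:~R ((phi u).2 - t)) rpredD ?intr_int.
have height_const : forall u, I u -> (phi u).2 = (phi 0).2.
  apply: (@interval_discrete_const R R^o (fun u => (phi u).2)) => [e|u v Iu Iv uv].
    move=> /phi_cont [d d_gt0 phi_near]; exists d => // u v Iu Iv uv.
    exact: le_lt_trans (norm_snd_le _) (phi_near u v Iu Iv uv).
  apply/subr0_eq/int_num_small => //.
  by have := rpredB (height_int u Iu) (height_int v Iv); rewrite opprB addrA subrK.
have [k tk] : exists k, (phi 0).2 = t + k%:~R.
  by have /intrP [k kE] := height_int 0 I0; exists k; rewrite -kE addrC subrK.
pose K p := (1 - p.2) *: phi p.1 + p.2 *: phi 0.
have K_cont : {within S, continuous K}.
  exact/straight_homotopy_continuous/unif_continuous_on_within.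
exists (proj \o K); split; [|split; [|split]].
- by apply: within_continuous_comp K_cont => ? _; exact: pi_continuous.
- move=> p [Ip1 _]; exists (K p); split=> //; exists k.
  by rewrite /K /= height_const // -tk -mulrDl subrK mul1r.
- move=> u Iu; rewrite /K /= subr0 subrr scale1r !scale0r addr0 add0r scale1r.
  by rewrite !phi_over.
- by move=> v Iv; rewrite /K /= phi_closed -scalerDl subrK scale1r phi_over.
Qed.

Lemma fiber_null_homotopic t (gamma : R -> Mspace R A) :
  loop_in (@fiber R A t) gamma -> null_homotopic_in setT gamma ->
  null_homotopic_in (@fiber R A t) gamma.
Proof.
move=> gamma_loop [H [H_cont [_ [H_ends H_sides]]]].
have [G G_over G_cont] := lift_homotopy detA H_cont.
have S_pair u v : I u -> I v -> S (u, v) by split.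
have pair_lip1 a u v : `|((a, u) : R * R) - (a, v)| <= `|u - v|.
  by rewrite prod_normE /= subrr normr0 ge_max normr_ge0 lexx.
have pair_lip2 a u v : `|((u, a) : R * R) - (v, a)| <= `|u - v|.
  by rewrite prod_normE /= subrr normr0 ge_max normr_ge0 lexx.
have left : G (0, 1) = G (0, 0).
  apply: (@lift_const_on_segment G (pair 0) (gamma 0)) => // v Iv.
  by rewrite G_over ?S_pair // (H_sides v Iv).1.
have right : G (1, 1) = G (1, 0).
  apply: (@lift_const_on_segment G (pair 1) (gamma 0)) => // v Iv.
  by rewrite G_over ?S_pair // (H_sides v Iv).2.
have top : G (1, 1) = G (0, 1).
  apply: (@lift_const_on_segment G (pair^~ 1) (gamma 0)) => // u Iu.
  by rewrite G_over ?S_pair // (H_ends u Iu).2.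
apply: (@closed_lift_null_homotopic t gamma (fun u => G (u, 0))) => //.
- apply: (unif_continuous_on_comp (g := pair^~ 0)) G_cont => [u Iu|u v].
    exact: S_pair.
  exact: pair_lip2.
- by move=> u Iu; rewrite G_over ?S_pair // (H_ends u Iu).1.
- by rewrite -right top left.
Qed.

End FiberInjectivity.

Lemma open_3cell_null_homotopic (R : realType) (A : 'M[int]_2) (U : set (Mspace R A))
    (gamma : R -> Mspace R A) :
  open_3cell U -> loop_in U gamma -> null_homotopic_in U gamma.
Proof.
move=> [f [g [f_cont [g_cont [fU [_ fg]]]]]] [gamma_cont [gamma01 gammaU]].
pose delta := g \o gamma.
have delta_cont : {within `[(0 : R), 1]%classic, continuous delta}.
  exact: within_continuous_comp_within gamma_cont g_cont gammaU.
have delta1 : delta 1 = delta 0 by rewrite /delta /= gamma01.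
have f_delta u : u \in `[0, 1] -> f (delta u) = gamma u.
  by move=> Iu; apply: fg; exact: gammaU.
have I0 : (0 : R) \in `[0, 1] by rewrite in_itv /= lexx ler01.
pose K p := (1 - p.2) *: delta p.1 + p.2 *: delta 0.
exists (f \o K); split; [|split; [|split]].
- apply: within_continuous_comp (straight_homotopy_continuous delta_cont) => ? _.
  exact: f_cont.
- by move=> p _; exact: fU.
- move=> u Iu; rewrite /K /= subr0 subrr scale1r !scale0r addr0 add0r scale1r.
  by rewrite !f_delta.
- by move=> v Iv; rewrite /K /= delta1 -scalerDl subrK scale1r f_delta.
Qed.

Unset Implicit Arguments.

Theorem lemma7 (R : realType) (A : 'M[int]_2) (hA : \det A = 1)
  (P : set (Mspace R A)) (hP : spine P) (t : R) (gamma : R -> Mspace R A) :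
  loop_in (@fiber R A t) gamma -> ~ null_homotopic_in (@fiber R A t) gamma ->
  exists2 u, u \in `[0, 1]%R & (P `&` @fiber R A t) (gamma u).
Proof.
move=> gamma_loop gamma_essential; apply: contrapT => gamma_avoids_P.
have gamma_cell : loop_in (~` P) gamma.
  case: gamma_loop => gamma_cont [gamma01 gammaF]; split=> //; split=> // u Iu Pu.
  by apply: gamma_avoids_P; exists u => //; split=> //; exact: gammaF.
apply/gamma_essential/(fiber_null_homotopic hA gamma_loop).
exact: null_homotopic_in_subset (subsetT _) (open_3cell_null_homotopic hP.2 gamma_cell).
Qed.
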